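(* Let $\sigma$ be a $\Phi$-nondegenerate super filling of $\mathrm{dg}(\lambda)$ (order $<_2$) with distinguished cell $u$. Then $\Phi_u(\sigma)$ is again $\Phi$-nondegenerate with the same distinguished cell $u$ (so $\sigma\mapsto\Phi_u(\sigma)$ is an involution on $\Phi$-nondegenerate super fillings), and \[ q^{p(\Phi_u(\sigma))+\mathrm{maj}(\Phi_u(\sigma))}t^{\mathrm{quinv}(\Phi_u(\sigma))}=q^{p(\sigma)+\mathrm{maj}(\sigma)}t^{\mathrm{quinv}(\sigma)}. \]
   Context: Let $\lambda=(\lambda_1\ge\dots\ge\lambda_k>0)$ be a partition; $\mathrm{dg}(\lambda)=\{(r,i):1\le i\le k,1\le r\le\lambda_i\}$, $(r,i)$ being row $r$ from the bottom and column $i$ from the left (columns bottom-justified of heights $\lambda_i$); $\mathrm{leg}((r,i))=\lambda_i-r$. $\mathcal A=\{1,\bar1,2,\bar2,\dots\}$ consists of positive letters $i$ and negative letters $\bar i$, $|i|=|\bar i|=i$, totally ordered by $<_2$: $0<1<2<3<\cdots<\bar3<\bar2<\bar1$. $I(a,b)=1$ if $a>b$ or $a=b$ is negative, and $I(a,b)=0$ if $a<b$ or $a=b$ is positive. A super filling is $\sigma:\mathrm{dg}(\lambda)\to\mathcal A$; a cell $u=(r,i)$, $r>1$, is a descent if $I(\sigma(u),\sigma((r-1,i)))=1$, and $\mathrm{maj}(\sigma)=\sum_{\text{descents }u}(\mathrm{leg}(u)+1)$. A triple is either three cells $(r+1,i),(r,i),(r,j)$ with $i<j$, or (degenerate) two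 cells $(r,i),(r,j)$ with $i<j$ and $\lambda_i=r$; with $a=\sigma((r+1,i))$ ($a=0$ if degenerate), $b=\sigma((r,i))$, $c=\sigma((r,j))$, it is a quinv triple iff exactly one of $I(a,b)=1$, $I(c,b)=0$, $I(a,c)=0$ holds; $\mathrm{quinv}(\sigma)$ is their number. $p(\sigma)$ is the number of positive entries. The reading order goes through rows top to bottom, each row right to left. $\Phi_u(\sigma)$ changes the sign of the entry in cell $u$. The distinguished label of $\sigma$ is the smallest positive integer $a$ such that some cell $(r,j)$ has $|\sigma((r,j))|=a$ and $r>a$; the distinguished cell is the first cell in reading order whose entry has absolute value $a$; $\sigma$ is $\Phi$-nondegenerate if $a$ exists and the distinguished cell belongs to no degenerate triple. *)

From mathcomp Require Import all_boot all_order all_algebra.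
Set Implicit Arguments. Unset Strict Implicit. Unset Printing Implicit Defensive.
Import Order.TTheory GRing.Theory Num.Theory.

Definition is_partition (la : seq nat) : bool :=
  sorted geq la && all (fun x => 0 < x)%N la.

(* lambda_i, for 1 <= i <= k (1-indexed columns). *)
Definition lam (la : seq nat) (i : nat) : nat := nth 0%N la i.-1.

(* cells are pairs (r, i): row r from the bottom, column i from the left *)
Definition cell := (nat * nat)%type.

Definition in_dg (la : seq nat) (u : cell) : bool :=
  [&& 1 <= u.2, u.2 <= size la, 1 <= u.1 & u.1 <= lam la u.2]%N.

(* Letters: positive letter i is the integer i > 0, negative letter \bar i is
   the integer -i < 0; 0 is the auxiliary letter 0. *)
Definition letter := int.

(* The order <_2 : 0 < 1 < 2 < 3 < ... < \bar 3 < \bar 2 < \bar 1.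
   On integers: non-negatives first, in their natural order, then negatives in
   their natural order (-3 < -2 < -1). *)
Definition lt2 (a b : letter) : bool :=
  if (0 <= a)%R == (0 <= b)%R then (a < b)%R else (0 <= a)%R.

Definition Iab (a b : letter) : bool := lt2 b a || ((a == b) && (a < 0)%R).

(* super fillings: sigma r i is the entry of cell (r,i) *)
Definition filling := nat -> nat -> letter.

Definition is_super_filling (la : seq nat) (s : filling) : Prop :=
  forall u : cell, in_dg la u -> s u.1 u.2 != 0%R.

Definition leg (la : seq nat) (u : cell) : nat := (lam la u.2 - u.1)%N.

Definition maj (la : seq nat) (s : filling) : nat :=
  \sum_(1 <= i < (size la).+1) \sum_(2 <= r < (lam la i).+1)
     (if Iab (s r i) (s r.-1 i) then (leg la (r, i)).+1 else 0)%N.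

Definition quinv_cond (a b c : letter) : bool :=
  (Iab a b + ~~ Iab c b + ~~ Iab a c == 1)%N.

Definition quinv_nondeg (la : seq nat) (s : filling) : nat :=
  \sum_(1 <= i < (size la).+1) \sum_(i.+1 <= j < (size la).+1)
    \sum_(1 <= r < (lam la i)) 
      (if (r <= lam la j)%N && quinv_cond (s r.+1 i) (s r i) (s r j)
       then 1 else 0)%N.

Definition quinv_deg (la : seq nat) (s : filling) : nat :=
  \sum_(1 <= i < (size la).+1) \sum_(i.+1 <= j < (size la).+1)
      (let r := lam la i in
       if (1 <= r)%N && (r <= lam la j)%N && quinv_cond 0%R (s r i) (s r j)
       then 1 else 0)%N.

Definition quinv (la : seq nat) (s : filling) : nat :=
  (quinv_nondeg la s + quinv_deg la s)%N.

Definition pos_count (la : seq nat) (s : filling) : nat :=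
  \sum_(1 <= i < (size la).+1) \sum_(1 <= r < (lam la i).+1)
     (if (0 < s r i)%R then 1 else 0)%N.

Definition Phi (u : cell) (s : filling) : filling :=
  fun r i => if (r, i) == u then (- s r i)%R else s r i.

Definition read_before (u v : cell) : bool :=
  (v.1 < u.1)%N || ((u.1 == v.1) && (v.2 < u.2)%N).

Definition dist_label (la : seq nat) (s : filling) (a : nat) : Prop :=
  (0 < a)%N /\
  (exists u : cell, [/\ in_dg la u, `|s u.1 u.2|%N = a & (a < u.1)%N]) /\
  (forall b : nat, (0 < b)%N ->
     (exists u : cell, [/\ in_dg la u, `|s u.1 u.2|%N = b & (b < u.1)%N]) ->
     (a <= b)%N).

Definition dist_cell (la : seq nat) (s : filling) (u : cell) : Prop :=
  exists a : nat, [/\ dist_label la s a, in_dg la u, `|s u.1 u.2|%N = a &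
    forall v : cell, in_dg la v -> `|s v.1 v.2|%N = a -> v <> u -> read_before u v].

Definition in_deg_triple (la : seq nat) (u : cell) : Prop :=
  in_dg la u /\
  ((exists j, [/\ (u.2 < j)%N, (j <= size la)%N, lam la u.2 = u.1 & (u.1 <= lam la j)%N])
   \/ (exists i, [/\ (1 <= i)%N, (i < u.2)%N & lam la i = u.1])).

Definition Phi_nondeg_at (la : seq nat) (s : filling) (u : cell) : Prop :=
  dist_cell la s u /\ ~ in_deg_triple la u.

From mathcomp Require Import all_boot all_order all_algebra.
From mathcomp Require Import zify.
Import GRing.Theory Order.TTheory Num.Theory.

(* Let u = (r, j) be the distinguished cell of sigma and a its
   distinguished label, so |sigma(u)| = a < r.  By minimality of a, every cell
   in a row >= a carries an entry of absolute value >= a, and every cell read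
   before u (all lie in rows >= r > a) carries one of absolute value > a.
   Hence the entry x = sigma(u) is, in absolute value, at most its lower
   neighbour and every entry of a triple containing u, and strictly smaller
   than its upper neighbour and every entry read before it.  The comparisons
   I(.,.) involving x then depend only on the sign of x, and:
   - Phi_u preserves all absolute values, hence the distinguished label and
     cell (lemma [dist_cell_abs]);
   - within column j, flipping x trades one positive entry against one unit
     of maj (lemma [col_weight_flip]), so p + maj is invariant;
   - every quinv triple through u keeps its status ([quinv_cond_flip_*]); the
     degenerate triples never contain u by nondegeneracy. *)

Lemma Iab_le_abs (x y : letter) :
  x != 0%R -> (absz x <= absz y)%N -> Iab x y = (x < 0)%R.
Proof.
rewrite /Iab /lt2.
have [hx|hx] := leP 0%R x; have [hy|hy] := leP 0%R y; rewrite /=; lia.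
Qed.

Lemma Iab_gt_abs (x y : letter) :
  x != 0%R -> (absz x < absz y)%N -> Iab y x = (0 < x)%R.
Proof.
rewrite /Iab /lt2.
have [hx|hx] := leP 0%R x; have [hy|hy] := leP 0%R y; rewrite /=; lia.
Qed.

Arguments Iab_le_abs [x y].
Arguments Iab_gt_abs [x y].

Lemma quinv_cond_flip_top (x b c : letter) :
  x != 0%R -> (absz x <= absz b)%N -> (absz x <= absz c)%N ->
  quinv_cond (- x)%R b c = quinv_cond x b c.
Proof.
move=> x0 xb xc; have x0' : (- x != 0)%R by rewrite oppr_eq0.
rewrite /quinv_cond (Iab_le_abs x0 xb) (Iab_le_abs x0 xc).
rewrite (Iab_le_abs x0') ?abszN // (Iab_le_abs x0') ?abszN //.
by case: (- x < 0)%R; case: (x < 0)%R; case: (Iab c b).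
Qed.

Lemma quinv_cond_flip_mid (a x c : letter) :
  x != 0%R -> (absz x < absz a)%N -> (absz x < absz c)%N ->
  quinv_cond a (- x)%R c = quinv_cond a x c.
Proof.
move=> x0 xa xc; have x0' : (- x != 0)%R by rewrite oppr_eq0.
rewrite /quinv_cond (Iab_gt_abs x0 xa) (Iab_gt_abs x0 xc).
rewrite (Iab_gt_abs x0') ?abszN // (Iab_gt_abs x0') ?abszN //.
by case: (0 < - x)%R; case: (0 < x)%R; case: (Iab a c).
Qed.

Lemma quinv_cond_flip_right (a b x : letter) :
  x != 0%R -> (absz x < absz a)%N -> (absz x <= absz b)%N ->
  quinv_cond a b (- x)%R = quinv_cond a b x.
Proof.
move=> x0 xa xb; have x0' : (- x != 0)%R by rewrite oppr_eq0.
rewrite /quinv_cond (Iab_gt_abs x0 xa) (Iab_le_abs x0 xb).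
rewrite (Iab_gt_abs x0') ?abszN // (Iab_le_abs x0') ?abszN //.
have -> : (0 < x)%R = ~~ (x < 0)%R by lia.
have -> : (0 < - x)%R = ~~ (- x < 0)%R by lia.
by case: (- x < 0)%R; case: (x < 0)%R; case: (Iab a b).
Qed.

Lemma sum_split3 (F : nat -> nat) (m r n : nat) : (m <= r < n)%N ->
  (\sum_(m <= i < n) F i
   = \sum_(m <= i < r) F i + F r + \sum_(r.+1 <= i < n) F i)%N.
Proof.
move=> /andP[mr rn]; rewrite (big_cat_nat mr (ltnW rn)) /= (big_ltn rn); lia.
Qed.

Arguments sum_split3 [F m r n].

Lemma big_nat_update (F G : nat -> nat) (m n r : nat) : (m <= r < n)%N ->
  (forall p, (m <= p < n)%N -> p != r -> F p = G p) ->
  (\sum_(m <= p < n) F p + G r = \sum_(m <= p < n) G p + F r)%N.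
Proof.
move=> hr FG; rewrite !(sum_split3 hr).
have -> : (\sum_(m <= p < r) F p = \sum_(m <= p < r) G p)%N.
  by apply: eq_big_nat => p hp; apply: FG; lia.
have -> : (\sum_(r.+1 <= p < n) F p = \sum_(r.+1 <= p < n) G p)%N.
  by apply: eq_big_nat => p hp; apply: FG; lia.
lia.
Qed.

Lemma big_nat_update2 (F G : nat -> nat) (m n r : nat) :
  (m <= r)%N -> (r.+1 < n)%N ->
  (forall p, (m <= p < n)%N -> p != r -> p != r.+1 -> F p = G p) ->
  (\sum_(m <= p < n) F p + G r + G r.+1
   = \sum_(m <= p < n) G p + F r + F r.+1)%N.
Proof.
move=> mr rn FG; pose H p := if p == r.+1 then G p else F p.
have FH : (\sum_(m <= p < n) F p + H r.+1 = \sum_(m <= p < n) H p + F r.+1)%N.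
  by apply: big_nat_update => [|p _ pr1]; [lia | rewrite /H (negbTE pr1)].
have HG : (\sum_(m <= p < n) H p + G r = \sum_(m <= p < n) G p + H r)%N.
  apply: big_nat_update => [|p hp pr]; first lia.
  by rewrite /H; case: eqP => [// | /eqP pr1]; apply: FG.
rewrite /H eqxx (_ : (r == r.+1) = false) in FH HG; lia.
Qed.

(* The contribution of one column, with entries c and height h, to p + maj. *)
Definition col_weight (c : nat -> letter) (h : nat) : nat :=
  (\sum_(1 <= p < h.+1) (if (0 < c p)%R then 1 else 0)
   + \sum_(2 <= p < h.+1) (if Iab (c p) (c p.-1) then (h - p).+1 else 0))%N.

Lemma pos_maj_columns (la : seq nat) (s : filling) :
  (pos_count la s + maj la s
   = \sum_(1 <= i < (size la).+1) col_weight (fun p => s p i) (lam la i))%N.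
Proof. by rewrite /pos_count /maj -big_split. Qed.

Lemma col_weight_ext (c c' : nat -> letter) (h : nat) :
  c =1 c' -> col_weight c h = col_weight c' h.
Proof.
by move=> cc'; rewrite /col_weight; congr (_ + _); apply: eq_bigr => p _;
  rewrite !cc'.
Qed.

(* Flipping the sign of an entry x of a column, where |x| is at most the
   absolute value of the entry below and smaller than that of the entry above,
   preserves the column weight: a positive x counts once in p and makes the
   cell above a descent (of weight leg(x)), a negative x makes its own cell a
   descent (of weight leg(x) + 1). *)
Lemma col_weight_flip (c c' : nat -> letter) (h r : nat) :
  (2 <= r <= h)%N -> c r != 0%R ->
  (forall p, p != r -> c' p = c p) -> c' r = (- c r)%R ->
  (absz (c r) <= absz (c r.-1))%N ->
  ((r < h)%N -> (absz (c r) < absz (c r.+1))%N) ->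
  col_weight c' h = col_weight c h.
Proof.
move=> /andP[r2 rh] x0 off at_r below above.
pose P (col : nat -> letter) p := (if (0 < col p)%R then 1 else 0)%N.
pose D (col : nat -> letter) p :=
  (if Iab (col p) (col p.-1) then (h - p).+1 else 0)%N.
have offD p : p != r -> p != r.+1 -> D c' p = D c p.
  by move=> pr pr1; rewrite /D !off //; lia.
have posE : (\sum_(1 <= p < h.+1) P c' p + P c r
             = \sum_(1 <= p < h.+1) P c p + P c' r)%N.
  by apply: big_nat_update => [|p _ pr]; [lia | rewrite /P off].
have x0' : (- c r != 0)%R by rewrite oppr_eq0.
have descr : (D c r = if (c r < 0)%R then (h - r).+1 else 0)%N.
  by rewrite /D (Iab_le_abs x0 below).
have descr' : (D c' r = if (0 < c r)%R then (h - r).+1 else 0)%N.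
  by rewrite /D at_r off ?(Iab_le_abs x0') ?abszN ?oppr_lt0 //; lia.
have descE : (\sum_(2 <= p < h.+1) D c' p + D c r
                + (if (0 < c r)%R then h - r else 0)
              = \sum_(2 <= p < h.+1) D c p + D c' r
                + (if (c r < 0)%R then h - r else 0))%N.
  case: (ltnP r h) => [rlt | rge]; last first.
    have -> : (h - r = 0)%N by lia.
    rewrite !if_same !addn0; apply: big_nat_update => [|p hp pr]; first lia.
    by apply: offD; lia.
  have above' : (D c r.+1 = if (0 < c r)%R then h - r else 0)%N.
    by rewrite /D /= (Iab_gt_abs x0 (above rlt)); case: ifP => //; lia.
  have above'' : (D c' r.+1 = if (c r < 0)%R then h - r else 0)%N.
    rewrite /D /= at_r off ?(Iab_gt_abs x0') ?abszN ?(above rlt) ?oppr_gt0 //.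
      by case: ifP => //; lia.
    lia.
  rewrite -above' -above''.
  by apply: big_nat_update2 => [||p _ pr pr1]; [lia | lia | apply: offD].
change (\sum_(1 <= p < h.+1) P c' p + \sum_(2 <= p < h.+1) D c' p
        = \sum_(1 <= p < h.+1) P c p + \sum_(2 <= p < h.+1) D c p)%N.
move: posE descE.
rewrite descr descr' /P at_r oppr_gt0.
have [xp|xn] : (0 < c r)%R \/ (c r < 0)%R by lia.
  by rewrite xp (_ : (c r < 0)%R = false); lia.
by rewrite xn (_ : (0 < c r)%R = false); lia.
Qed.

Lemma absz_Phi (u : cell) (s : filling) (p i : nat) :
  absz (Phi u s p i) = absz (s p i).
Proof. by rewrite /Phi; case: ifP => _; rewrite ?abszN. Qed.

Lemma PhiE (r j : nat) (s : filling) (p i : nat) :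
  Phi (r, j) s p i = if (p == r) && (i == j) then (- s p i)%R else s p i.
Proof. by rewrite /Phi xpair_eqE. Qed.

Lemma dist_label_abs (la : seq nat) (s1 s2 : filling) (a : nat) :
  (forall p i, absz (s1 p i) = absz (s2 p i)) ->
  dist_label la s1 a -> dist_label la s2 a.
Proof.
move=> abs12 [a0 [[v [v_in v_abs v_row]] a_min]]; split=> //; split.
  by exists v; rewrite -abs12.
by move=> b b0 [w [w_in w_abs w_row]]; apply: a_min => //; exists w; rewrite abs12.
Qed.

Lemma dist_cell_abs (la : seq nat) (s1 s2 : filling) (u : cell) :
  (forall p i, absz (s1 p i) = absz (s2 p i)) ->
  dist_cell la s1 u -> dist_cell la s2 u.
Proof.
move=> abs12 [a [a_label u_in u_abs u_first]]; exists a; split=> //.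
- exact: dist_label_abs a_label.
- by rewrite -abs12.
- by move=> v v_in; rewrite -abs12; apply: u_first.
Qed.

Section DistinguishedCell.

Variables (la : seq nat) (s : filling) (r j a : nat).
Hypotheses (s_super : is_super_filling la s) (a_label : dist_label la s a)
  (u_in : in_dg la (r, j)) (u_abs : absz (s r j) = a)
  (u_first : forall v : cell, in_dg la v -> absz (s v.1 v.2) = a ->
     v <> (r, j) -> read_before (r, j) v).

Lemma label_pos : (0 < a)%N.
Proof. by case: a_label. Qed.

Lemma label_lt_row : (a < r)%N.
Proof.
case: a_label => _ [[v [v_in v_abs v_row]] _].
case: (eqVneq v (r, j)) => [ev | v_ne]; first by subst v.
by have := u_first _ v_in v_abs (elimN eqP v_ne); rewrite /read_before /=; lia.
Qed.

Lemma entry_neq0 : s r j != 0%R.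
Proof. by rewrite -absz_gt0 u_abs label_pos. Qed.

Lemma abs_ge_label (p i : nat) :
  in_dg la (p, i) -> (a <= p)%N -> (absz (s r j) <= absz (s p i))%N.
Proof.
move=> v_in ap; rewrite u_abs leqNgt; apply/negP => small.
have b0 : (0 < absz (s p i))%N by rewrite absz_gt0; exact: (s_super (p, i) v_in).
case: a_label => _ [_ a_min].
have := a_min _ b0 (ex_intro _ (p, i) (And3 v_in erefl (leq_trans small ap))).
lia.
Qed.

Lemma abs_gt_label (p i : nat) :
  in_dg la (p, i) -> read_before (p, i) (r, j) ->
  (absz (s r j) < absz (s p i))%N.
Proof.
move=> v_in before; have := label_lt_row.
have := abs_ge_label _ _ v_in; rewrite /read_before /= in before *.
case: (eqVneq (absz (s p i)) a) => [v_abs | ]; last by rewrite u_abs; lia.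
have v_ne : (p, i) <> (r, j) by move=> [ep ei]; subst; lia.
by have := u_first _ v_in v_abs v_ne; rewrite /read_before /=; lia.
Qed.

(* Flipping s(u) preserves p + maj: only column j changes, and there the
   flipped entry sits between a weakly larger entry below (row r - 1 >= a)
   and a strictly larger entry above (read before u). *)
Lemma pos_maj_flip :
  (pos_count la (Phi (r, j) s) + maj la (Phi (r, j) s)
   = pos_count la s + maj la s)%N.
Proof.
rewrite !pos_maj_columns; apply: eq_big_nat => i _.
case: (eqVneq i j) => [-> | ij]; last first.
  by apply: col_weight_ext => p; rewrite PhiE (negbTE ij) andbF.
move: u_in; rewrite /in_dg /= => /and4P[j1 js r1 rj].
have := label_lt_row; have := label_pos => a0 ar.
apply: (@col_weight_flip _ _ _ r).
- by apply/andP; split; lia.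
- exact: entry_neq0.
- by move=> p pr; rewrite PhiE (negbTE pr).
- by rewrite PhiE !eqxx.
- by apply: abs_ge_label; rewrite /in_dg /=; lia.
- by move=> rlt; apply: abs_gt_label; rewrite /in_dg /read_before /=; lia.
Qed.

(* Each nondegenerate triple keeps its status: s(u) has the smallest
   absolute value among the entries of any triple through u. *)
Lemma nondeg_triple_flip (i k p : nat) :
  (1 <= i)%N -> (i < k <= size la)%N -> (1 <= p < lam la i)%N ->
  (p <= lam la k)%N ->
  quinv_cond (Phi (r, j) s p.+1 i) (Phi (r, j) s p i) (Phi (r, j) s p k)
  = quinv_cond (s p.+1 i) (s p i) (s p k).
Proof.
move=> i1 /andP[ik ks] /andP[p1 pi] pk; rewrite !PhiE.
have := label_lt_row; have := label_pos => a0 ar.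
have [/andP[/eqP top /eqP ij] | not_top] := boolP ((p.+1 == r) && (i == j)).
  subst i; rewrite top eqxx (_ : (p == r) = false) /=; last by lia.
  rewrite quinv_cond_flip_top ?entry_neq0 //.
    by apply: abs_ge_label; rewrite /in_dg /=; lia.
  by apply: abs_ge_label; rewrite /in_dg /=; lia.
have [/andP[/eqP mid /eqP ij] | not_mid] := boolP ((p == r) && (i == j)).
  subst i; rewrite mid eqxx (_ : (k == j) = false) /=; last by lia.
  rewrite quinv_cond_flip_mid ?entry_neq0 //.
    by apply: abs_gt_label; rewrite /in_dg /read_before /=; lia.
  by apply: abs_gt_label; rewrite /in_dg /read_before /=; lia.
have [/andP[/eqP right /eqP kj] | not_right] := boolP ((p == r) && (k == j)).
  subst k; rewrite right quinv_cond_flip_right ?entry_neq0 //.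
    by apply: abs_gt_label; rewrite /in_dg /read_before /=; lia.
  by apply: abs_ge_label; rewrite /in_dg /=; lia.
by [].
Qed.

(* A degenerate triple does not contain u, hence is untouched by Phi_u. *)
Lemma deg_triple_flip (i k : nat) :
  ~ in_deg_triple la (r, j) -> (1 <= i)%N -> (i < k <= size la)%N ->
  (lam la i <= lam la k)%N ->
  quinv_cond 0 (Phi (r, j) s (lam la i) i) (Phi (r, j) s (lam la i) k)
  = quinv_cond 0 (s (lam la i) i) (s (lam la i) k).
Proof.
move=> u_nondeg i1 /andP[ik ks] ik_lam; rewrite !PhiE.
have -> : (lam la i == r) && (i == j) = false.
  apply/negP => /andP[/eqP ir /eqP ij]; apply: u_nondeg; split=> //.
  by left; exists k; split=> /=; rewrite -?ij -?ir //.
have -> // : (lam la i == r) && (k == j) = false.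
apply/negP => /andP[/eqP ir /eqP kj]; apply: u_nondeg; split=> //.
by right; exists i; split=> //=; lia.
Qed.

Lemma quinv_flip :
  ~ in_deg_triple la (r, j) -> quinv la (Phi (r, j) s) = quinv la s.
Proof.
move=> u_nondeg; rewrite /quinv; congr (_ + _).
  rewrite /quinv_nondeg; apply: eq_big_nat => i hi; apply: eq_big_nat => k hk.
  apply: eq_big_nat => p hp; case pk : (p <= lam la k)%N => //=.
  by rewrite nondeg_triple_flip //; lia.
rewrite /quinv_deg; apply: eq_big_nat => i hi; apply: eq_big_nat => k hk /=.
case ik : (lam la i <= lam la k)%N; rewrite ?andbF ?andbT //=.
by rewrite deg_triple_flip //; lia.
Qed.

End DistinguishedCell.

Theorem mainTheorem11 (la : seq nat) (s : filling) (u : cell) :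
  is_partition la -> is_super_filling la s ->
  Phi_nondeg_at la s u ->
  Phi_nondeg_at la (Phi u s) u /\
  (forall (R : comNzRingType) (q t : R),
     (q ^+ (pos_count la (Phi u s) + maj la (Phi u s)) * t ^+ quinv la (Phi u s)
      = q ^+ (pos_count la s + maj la s) * t ^+ quinv la s)%R).
Proof.
move=> _ s_super [u_dist u_nondeg]; split.
  by split=> //; apply: dist_cell_abs u_dist => p i; rewrite absz_Phi.
case: u_dist u_nondeg => a [a_label u_in u_abs u_first].
case: u u_in u_abs u_first => r j /= u_in u_abs u_first u_nondeg R q t.
by rewrite (pos_maj_flip _ _ _ _ _ s_super a_label u_in u_abs u_first)
  (quinv_flip _ _ _ _ _ s_super a_label u_in u_abs u_first u_nondeg).
Qed.
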